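(* Let $\mathcal{K}\subseteq\mathbb{R}^n$ be a proper convex cone with a $\nu$-LHSCB $f$, and let $A\in\mathbb{R}^{m\times n}$ (full row rank), $\mathbf{b}\in\mathbb{R}^m$, $\mathbf{c}\in\mathbb{R}^n$. Let $\eta>0$, $\tau>0$, $(\mathbf{x},\mathbf{y},\mathbf{s})\in\mathcal{N}(\eta,\tau)$, let $(\Delta\mathbf{x},\Delta\mathbf{y},\Delta\mathbf{s})$ be the solution of the Newton system at $(\mathbf{x},\mathbf{y},\mathbf{s})$ with parameter $\tau$, and let $\mathbf{x}^+=\mathbf{x}+\Delta\mathbf{x}$, $\mathbf{s}^+=\mathbf{s}+\Delta\mathbf{s}$. Then \[\tau(\nu-\eta^2)\le(\mathbf{x}^+)^\top\mathbf{s}^+\le\tau\nu.\]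
   Context: $\mathcal{K}\subseteq\mathbb{R}^n$ is a proper (closed, convex, pointed, full-dimensional) cone with interior $\mathcal{K}^\circ$ and dual cone $\mathcal{K}^*=\{\mathbf{s}:\mathbf{s}^\top\mathbf{x}\ge 0\ \forall \mathbf{x}\in\mathcal{K}\}$. A $\nu$-LHSCB for $\mathcal{K}$ is a strictly convex, three times differentiable $f:\mathcal{K}^\circ\to\mathbb{R}$ with $f(\mathbf{x})\to\infty$ as $\mathbf{x}$ approaches the boundary of $\mathcal{K}$, $|D^3f(\mathbf{x})[\mathbf{h},\mathbf{h},\mathbf{h}]|\le 2\,(D^2f(\mathbf{x})[\mathbf{h},\mathbf{h}])^{3/2}$, $\nu=\sup_{\mathbf{x}\in\mathcal{K}^\circ}g(\mathbf{x})^\top H(\mathbf{x})^{-1}g(\mathbf{x})<\infty$, and $f(t\mathbf{x})=f(\mathbf{x})-\nu\ln t$ for $t>0$; $g,H$ are the gradient and Hessian of $f$. Local norms: $\|\mathbf{v}\|_{\mathbf{x}}=\sqrt{\mathbf{v}^\top H(\mathbf{x})\mathbf{v}}$, $\|\mathbf{v}\|^*_{\mathbf{x}}=\sqrt{\mathbf{v}^\top H(\mathbf{x})^{-1}\mathbf{v}}$. $\mathcal{F}^\circ=\{(\mathbf{x},\mathbf{y},\mathbf{s})\in\mathcal{K}^\circ\times\mathbb{R}^m\times(\mathcal{K}^* )^\circ: A\mathbf{x}=\mathbf{b},\ A^\top\mathbf{y}+\mathbf{s}=\mathbf{c}\}$ (strictly feasible solutions of the pair $\inf\{\mathbf{c}^\top\mathbf{x}:A\mathbf{x}=\mathbf{b},\mathbf{x}\in\mathcal{K}\}$,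 $\sup\{\mathbf{b}^\top\mathbf{y}:A^\top\mathbf{y}+\mathbf{s}=\mathbf{c},\mathbf{s}\in\mathcal{K}^*\}$). $\mathcal{N}(\eta,\tau)=\{(\mathbf{x},\mathbf{y},\mathbf{s})\in\mathcal{F}^\circ:\|\mathbf{s}+\tau g(\mathbf{x})\|^*_{\mathbf{x}}\le\eta\tau\}$. The Newton system at $(\mathbf{x},\mathbf{y},\mathbf{s})$ with parameter $\tau$ is: $A\Delta\mathbf{x}=\mathbf{0}$, $A^\top\Delta\mathbf{y}+\Delta\mathbf{s}=\mathbf{0}$, $\tau H(\mathbf{x})\Delta\mathbf{x}+\Delta\mathbf{s}=-(\mathbf{s}+\tau g(\mathbf{x}))$. *)

From HB Require Import structures.
From mathcomp Require Import all_boot all_order all_algebra.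
From mathcomp Require Import all_classical all_reals all_analysis.
Set Implicit Arguments. Unset Strict Implicit. Unset Printing Implicit Defensive.
Import Order.TTheory GRing.Theory Num.Theory.
Import numFieldNormedType.Exports.
Local Open Scope classical_set_scope.
Local Open Scope ring_scope.

Section Defs.
Variables (R : realType) (n : nat).
Notation vec := 'cV[R]_n.

Definition dotv (u v : vec) : R := (u^T *m v) 0 0.

Definition is_cone (K : set vec) : Prop :=
  forall x t, K x -> 0 <= t -> K (t *: x).
Definition convex_set (K : set vec) : Prop :=
  forall x y t, K x -> K y -> 0 <= t <= 1 -> K (t *: x + (1 - t) *: y).
Definition pointed (K : set vec) : Prop :=
  forall x, K x -> K (- x) -> x = 0.
Definition proper_cone (K : set vec) : Prop :=
  [/\ is_cone K, closed K, convex_set K, pointed K & interior K !=set0].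

Definition dual_cone (K : set vec) : set vec :=
  [set s | forall x, K x -> 0 <= dotv s x].

(* local dual norm ||v||^*_x given the Hessian matrix Hx = H(x) *)
Definition dual_local_norm (Hx : 'M[R]_n) (v : vec) : R :=
  Num.sqrt ((v^T *m invmx Hx *m v) 0 0).

Definition LHSCB (K : set vec) (f : vec -> R) (g : vec -> vec)
  (H : vec -> 'M[R]_n) (nu : R) : Prop :=
  [/\
      (forall x, interior K x ->
         [/\ differentiable f x, differentiable g x, differentiable H x,
             (forall v, 'D_v f x = dotv (g x) v) &
             (forall v, 'D_v g x = H x *m v)]),
      (forall x y t, interior K x -> interior K y -> x != y -> 0 < t < 1 ->
         f (t *: x + (1 - t) *: y) < t * f x + (1 - t) * f y) &
      [/\
      (forall xb, K xb -> ~ interior K xb ->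
         f x @[x --> within (interior K) (nbhs xb)] --> +oo),
      (forall x h, interior K x ->
         `| ('D_h (fun y => (h^T *m H y *m h) 0 0) x) |
           <= 2 * Num.sqrt ((h^T *m H x *m h) 0 0) ^+ 3),
      (has_sup ((fun x => ((g x)^T *m invmx (H x) *m g x) 0 0) @` interior K) /\
       sup ((fun x => ((g x)^T *m invmx (H x) *m g x) 0 0) @` interior K) = nu) &
      (forall x t, interior K x -> 0 < t -> f (t *: x) = f x - nu * ln t)]].

End Defs.

(* Put Q := dx' H(x) dx.  Pairing the Newton equation with x and with dx, and
   using dx' ds = 0 (dx lies in the kernel of A, ds in the range of A') together
   with the consequences <g(x), x> = -nu and H(x) x = -g(x) of logarithmic
   homogeneity, gives (x + dx)'(s + ds) = tau (nu - Q).  Measuring the Newton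
   equation in the H(x)^-1 norm gives ||s + tau g(x)||*_x^2 = tau^2 Q + ||ds||*_x^2,
   hence Q <= eta^2.  This uses that H(x) is symmetric, which follows from the
   second-difference quotients of f, and positive definite, which also gives
   Q >= 0: if h' H(x) h <= 0, self-concordance keeps h' H h nonpositive on a
   segment starting at x, where f would then be concave, against strict convexity. *)

From HB Require Import structures.
From mathcomp Require Import all_boot all_order all_algebra.
From mathcomp Require Import all_classical all_reals all_analysis.
From mathcomp Require Import ring lra.
Set Implicit Arguments. Unset Strict Implicit. Unset Printing Implicit Defensive.
Import Order.TTheory GRing.Theory Num.Theory.
Import numFieldNormedType.Exports.
Local Open Scope classical_set_scope.
Local Open Scope ring_scope.

Section DotProduct.
Variables (R : realType) (n : nat).
Implicit Types u v w : 'cV[R]_n.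

Lemma dotvE u v : dotv u v = \sum_(i < n) u i 0 * v i 0.
Proof. by rewrite /dotv mxE; apply: eq_bigr => i _; rewrite mxE. Qed.

Lemma dotvC u v : dotv u v = dotv v u.
Proof. by rewrite !dotvE; apply: eq_bigr => i _; rewrite mulrC. Qed.

Lemma dotvDl u v w : dotv (u + v) w = dotv u w + dotv v w.
Proof. by rewrite !dotvE -big_split; apply: eq_bigr => i _; rewrite mxE mulrDl. Qed.

Lemma dotvNl u w : dotv (- u) w = - dotv u w.
Proof. by rewrite !dotvE -sumrN; apply: eq_bigr => i _; rewrite mxE mulNr. Qed.

Lemma dotvBl u v w : dotv (u - v) w = dotv u w - dotv v w.
Proof. by rewrite dotvDl dotvNl. Qed.

Lemma dotvZl k u w : dotv (k *: u) w = k * dotv u w.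
Proof. by rewrite !dotvE mulr_sumr; apply: eq_bigr => i _; rewrite mxE mulrA. Qed.

Lemma dotv0l w : dotv 0 w = 0.
Proof. by rewrite dotvE big1 // => i _; rewrite mxE mul0r. Qed.

Lemma dotvDr u v w : dotv w (u + v) = dotv w u + dotv w v.
Proof. by rewrite !(dotvC w) dotvDl. Qed.

Lemma dotvNr u w : dotv w (- u) = - dotv w u.
Proof. by rewrite !(dotvC w) dotvNl. Qed.

Lemma dotvZr k u w : dotv w (k *: u) = k * dotv w u.
Proof. by rewrite !(dotvC w) dotvZl. Qed.

Lemma dotv0r w : dotv w 0 = 0.
Proof. by rewrite dotvC dotv0l. Qed.

Lemma normr_dotv_le w u : `|dotv w u| <= `|w| * \sum_(i < n) `|u i 0|.
Proof.
rewrite dotvE mulr_sumr; apply: le_trans (ler_norm_sum _ _ _) _.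
apply: ler_sum => i _; rewrite normrM ler_wpM2r //.
rewrite [leRHS]/Num.Def.normr /= mx_normrE; apply/bigmax_geP; right => /=.
by exists (i, 0).
Qed.

End DotProduct.

Lemma dotv_trmx (R : realType) (m n : nat) (A : 'M[R]_(m, n)) u w :
  dotv u (A^T *m w) = dotv (A *m u) w.
Proof. by rewrite /dotv mulmxA -trmx_mul. Qed.

Lemma is_derive_line (R : realType) (V W : normedModType R) (F : V -> W)
    (p h : V) (t : R) :
  derivable F (p + t *: h) h ->
  is_derive t 1 (fun s : R => F (p + s *: h)) ('D_h F (p + t *: h)).
Proof.
move=> dF.
have E : (fun s : R => s^-1 *: (((fun s => F (p + s *: h)) \o shift t) (s *: 1)
                                 - F (p + t *: h)))
   = (fun s => s^-1 *: ((F \o shift (p + t *: h)) (s *: h) - F (p + t *: h))).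
  apply: funext => s /=; congr (_ *: (F _ - _)).
  by rewrite [s%:A]mulr1 scalerDl addrCA addrC.
by split; rewrite /derivable /derive /= E.
Qed.

Section VectorCalculus.
Variables (R : realType) (n : nat).
Notation vec := 'cV[R]_n.

Lemma dotv_funE (G F : vec -> vec) :
  (fun y => dotv (G y) (F y)) = \sum_(i < n) ((fun y => G y i 0) * (fun y => F y i 0)).
Proof. by rewrite fct_sumE; apply: funext => y; rewrite dotvE. Qed.

Lemma derivable_dotv (G F : vec -> vec) (x v : vec) :
  derivable G x v -> derivable F x v -> derivable (fun y => dotv (G y) (F y)) x v.
Proof.
move=> /derivable_mxP dG /derivable_mxP dF; rewrite dotv_funE.
by apply: derivable_sum => i; apply: derivableM.
Qed.

Lemma derive_dotv (G F : vec -> vec) (x v : vec) :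
  derivable G x v -> derivable F x v ->
  'D_v (fun y => dotv (G y) (F y)) x = dotv ('D_v G x) (F x) + dotv (G x) ('D_v F x).
Proof.
move=> dG dF; have /derivable_mxP dGi := dG; have /derivable_mxP dFi := dF.
rewrite dotv_funE derive_sum; last by move=> i; apply: derivableM.
rewrite (derive_mx dG) (derive_mx dF) !dotvE -big_split /=.
apply: eq_bigr => i _; rewrite deriveM // !mxE /GRing.scale /= addrC.
by congr (_ + _); exact: mulrC.
Qed.

Lemma derivable_mulmxr (M : vec -> 'M[R]_n) (x v w : vec) :
  derivable M x v -> derivable (fun y => M y *m w) x v.
Proof.
move=> /derivable_mxP dM; apply/derivable_mxP => i j.
have -> : (fun y => (M y *m w) i j) = \sum_(k < n) (w k j *: (fun y => M y i k)).
  rewrite fct_sumE; apply: funext => y; rewrite mxE; apply: eq_bigr => k _ /=.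
  by rewrite mulrC.
by apply: derivable_sum => k; apply: derivableZ.
Qed.

Lemma differentiable_remainder_le (G : vec -> vec) (x : vec) (M : 'M[R]_n) :
  differentiable G x -> (forall v, 'D_v G x = M *m v) ->
  forall e, 0 < e -> \forall z \near (0 : vec), `|G (x + z) - G x - M *m z| <= e * `|z|.
Proof.
move=> dG DG e e0; have /eqaddoP/(_ e e0) := diff_locally dG.
apply: filterS => z /=.
by rewrite !fctE /= -(deriveE z dG) DG opprD addrA [z + x]addrC.
Qed.

End VectorCalculus.

Section RealFunctions.
Variable R : realType.
Implicit Types (psi dpsi : R -> R) (T L : R).

Lemma is_derive_lt0_left (Phi : R -> R) (c d b : R) :
  is_derive c 1 Phi d -> d < 0 -> b < c -> exists2 s, b < s < c & Phi c < Phi s.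
Proof.
move=> [dPhi dPhi_val] d_lt0 bc.
have Phi_quot : (fun h : R => h^-1 *: ((Phi \o shift c) (h *: 1) - Phi c)) @ 0^' --> d.
  by rewrite -dPhi_val; exact: dPhi.
have := @cvgr_lt R _ _ _ _ _ Phi_quot 0 d_lt0; rewrite near_withinE.
move=> near_lt0; have [/= e e_gt0 quot_lt0] := nbhs_norm0P.1 (near_lt0 _).
set k := Order.min (e / 2) ((c - b) / 2).
have k_gt0 : 0 < k by rewrite lt_min !divr_gt0 // subr_gt0.
have k_le : k <= e / 2 /\ k <= (c - b) / 2 by split; rewrite ge_min lexx ?orbT.
have k_lt : `|- k| < e by rewrite normrN gtr0_norm //; lra.
have : (- k)^-1 * (Phi (- k * 1 + c) - Phi c) < 0.
  by apply: (quot_lt0 (- k) k_lt); rewrite oppr_eq0 gt_eqF.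
rewrite mulr1 nmulr_rlt0 ?invr_lt0 ?oppr_lt0 // subr_gt0.
move=> Phi_lt; exists (- k + c) => //; apply/andP; split; lra.
Qed.

(* The weight 2T - t turns the linear growth bound into a strict decrease at an
   interior maximum of psi (2T - t) on [0, s]. *)
Lemma nonpos_of_derive_le_linear psi dpsi T L :
  0 < T -> 0 <= L -> 2 * T * L < 1 ->
  (forall s, 0 <= s <= T -> is_derive s 1 psi (dpsi s)) ->
  (forall s, 0 <= s <= T -> 0 < psi s -> dpsi s <= L * psi s) ->
  psi 0 <= 0 -> forall s, 0 <= s <= T -> psi s <= 0.
Proof.
move=> T_gt0 L_ge0 TL Dpsi psi_growth psi0 s /andP[s0 sT]; rewrite leNgt; apply/negP => psi_s.
pose Phi := psi * (cst (2 * T) - id).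
have DPhi t : 0 <= t <= T ->
    is_derive t 1 Phi (psi t *: (0 - 1) + (2 * T - t) *: dpsi t).
  by move=> tI; apply: is_deriveM; exact: Dpsi.
have [t tI Phi_max] : exists2 t, t \in `[0, s] & forall u, u \in `[0, s] -> Phi u <= Phi t.
  apply: EVT_max => //; apply: derivable_within_continuous => t.
  by rewrite in_itv /= => /andP[t0 ts]; have [] // := DPhi t; rewrite t0 (le_trans ts).
move: tI; rewrite in_itv /= => /andP[t0 ts]; have tT : 0 <= t <= T by rewrite t0 (le_trans ts).
have Phi_t : 0 < psi t * (2 * T - t).
  apply: lt_le_trans (Phi_max s _); last by rewrite in_itv /= s0 lexx.
  by rewrite /Phi /= mulr_gt0 //; change (0 < 2 * T - s); lra.
have psi_t : 0 < psi t by move: Phi_t; rewrite pmulr_lgt0 //; lra.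
have t_gt0 : 0 < t.
  by rewrite lt_neqAle t0 andbT eq_sym; apply: contraTneq psi_t => ->; rewrite -leNgt.
have DPhi_lt0 : psi t *: (0 - 1) + (2 * T - t) *: dpsi t < 0.
  have h1 : 0 <= (2 * T - t) * (L * psi t - dpsi t).
    by rewrite mulr_ge0 ?subr_ge0 ?psi_growth //; lra.
  have h2 : 0 <= t * (L * psi t) by rewrite !mulr_ge0 // ltW.
  have h3 : 0 < (1 - 2 * T * L) * psi t by rewrite mulr_gt0 // subr_gt0.
  rewrite /GRing.scale /=; nra.
have [u /andP[u0 ut] Phi_lt] := is_derive_lt0_left (DPhi t tT) DPhi_lt0 t_gt0.
have := Phi_max u; rewrite in_itv /= ltW //= (le_trans (ltW ut)) // leNgt.
by move=> /(_ isT); rewrite Phi_lt.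
Qed.

Lemma nonpos_of_derive_le_sqrt3 psi dpsi T : 0 < T ->
  (forall s, 0 <= s <= T -> is_derive s 1 psi (dpsi s)) ->
  (forall s, 0 <= s <= T -> dpsi s <= 2 * Num.sqrt (psi s) ^+ 3) ->
  psi 0 <= 0 ->
  exists2 T1, 0 < T1 <= T & forall s, 0 <= s <= T1 -> psi s <= 0.
Proof.
move=> T_gt0 Dpsi psi_growth psi0.
have [c cI psi_max] : exists2 c, c \in `[0, T] & forall u, u \in `[0, T] -> psi u <= psi c.
  apply: EVT_max; first exact: ltW.
  apply: derivable_within_continuous => s; rewrite in_itv /= => sI.
  by have [] := Dpsi s sI.
set L := 2 * Num.sqrt (psi c).
have L_ge0 : 0 <= L by rewrite mulr_ge0 // sqrtr_ge0.
set T1 := Order.min T (4 * (L + 1))^-1.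
have T1_gt0 : 0 < T1 by rewrite lt_min T_gt0 invr_gt0 mulr_gt0 // ltr_wpDl.
have T1_le : T1 <= T /\ T1 <= (4 * (L + 1))^-1 by split; rewrite ge_min lexx ?orbT.
have sub s : 0 <= s <= T1 -> 0 <= s <= T.
  by move=> /andP[s0 sT1]; rewrite s0 (le_trans sT1) //; case: T1_le.
exists T1; first by rewrite T1_gt0; case: T1_le.
apply: (@nonpos_of_derive_le_linear _ dpsi _ L) => // [|s sI|s sI psi_s].
- have : T1 * (4 * (L + 1)) <= 1.
    by rewrite -ler_pdivlMr ?mulr_gt0 ?ltr_wpDl // div1r; case: T1_le.
  nra.
- exact/Dpsi/sub.
- have psi_le : psi s <= psi c by apply: psi_max; rewrite in_itv /= sub.
  have sqrt_le : Num.sqrt (psi s) <= Num.sqrt (psi c).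
    by rewrite ler_sqrt // (le_trans (ltW psi_s)).
  have sqrt_sqr : Num.sqrt (psi s) ^+ 2 = psi s by rewrite sqr_sqrtr // ltW.
  apply: le_trans (psi_growth s (sub s sI)) _.
  by rewrite /L exprS sqrt_sqr mulrA ler_pM2r // ler_pM2l.
Qed.

Lemma concave_midpoint (phi dphi ddphi : R -> R) (a b : R) : a <= b ->
  (forall s, a <= s <= b -> is_derive s 1 phi (dphi s)) ->
  (forall s, a <= s <= b -> is_derive s 1 dphi (ddphi s)) ->
  (forall s, a < s < b -> ddphi s <= 0) ->
  (phi a + phi b) / 2 <= phi ((a + b) / 2).
Proof.
move=> ab D1 D2 DD_le0.
have oo_cc s : s \in `]a, b[ -> a <= s <= b.
  by rewrite in_itv /= => /andP[? ?]; rewrite !ltW.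
have DNphi s : s \in `]a, b[ -> \forall y \near s, - dphi y = 'D_1 (- phi) y.
  move=> sI; near=> y.
  have [dy <-] : is_derive y 1 phi (dphi y).
    by apply/D1/oo_cc; near: y; exact: near_in_itvoo.
  by rewrite deriveN.
have DNphi1 : {in `]a, b[, forall s, derivable (- phi) s 1}.
  by move=> s /oo_cc/D1/is_deriveN[].
have DDNphi1 : {in `]a, b[, forall s, derivable ('D_1 (- phi)) s 1}.
  move=> s sI.
  by have [] := near_eq_is_derive (DNphi s sI) (is_deriveN (D2 s (oo_cc s sI))).
have DDNphi_ge0 s : a < s < b -> 0 <= 'D_1 ('D_1 (- phi)) s.
  move=> sI; rewrite -(near_eq_derive _ (DNphi s _)) ?in_itv //.
  have [dd dd_val] := D2 s (oo_cc s sI).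
  by rewrite (deriveN dd) dd_val oppr_ge0 DD_le0.
have cvgNphi s : a <= s <= b -> (- phi) x @[x --> s] --> - phi s.
  move=> /D1 [dphi_s _]; apply: cvgN.
  exact/differentiable_continuous/derivable1_diffP.
have half0 : 0 <= 2^-1 :> R by rewrite invr_ge0.
have half1 : 2^-1 <= 1 :> R by rewrite invf_le1 ?ler1n.
have := second_derivative_convex DDNphi_ge0 (cvg_at_left_filter (cvgNphi b _))
  (cvg_at_right_filter (cvgNphi a _)) DNphi1 DDNphi1 (Itv01 half0 half1) ab.
rewrite !convRE /= !lexx ab => /(_ isT isT).
have -> : 2^-1 * a + unstable.onem 2^-1 * b = (a + b) / 2.
  by rewrite /unstable.onem; field.
rewrite /unstable.onem => concave.
have : - phi ((a + b) / 2) <= 2^-1 * - phi a + (1 - 2^-1) * - phi b := concave.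
lra.
Unshelve. all: by end_near.
Qed.

End RealFunctions.

Section Barrier.
Variables (R : realType) (n : nat).
Notation vec := 'cV[R]_n.
Variables (U : set vec) (f : vec -> R) (g : vec -> vec) (H : vec -> 'M[R]_n).
Hypothesis U_open : open U.
Hypothesis f_grad : forall x, U x ->
  differentiable f x /\ forall v, 'D_v f x = dotv (g x) v.
Hypothesis g_jac : forall x, U x ->
  differentiable g x /\ forall v, 'D_v g x = H x *m v.

Lemma is_derive_f_line p h t : U (p + t *: h) ->
  is_derive t 1 (fun s => f (p + s *: h)) (dotv (g (p + t *: h)) h).
Proof.
move=> /f_grad[df <-]; apply: is_derive_line; exact: diff_derivable.
Qed.

Lemma is_derive_g_line p h u t : U (p + t *: h) ->
  is_derive t 1 (fun s => dotv (g (p + s *: h)) u) (dotv (H (p + t *: h) *m h) u).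
Proof.
move=> /g_jac[dg Dg].
have dgu : derivable (fun y => dotv (g y) u) (p + t *: h) h.
  exact: derivable_dotv (diff_derivable dg) (derivable_cst _ _ _).
have := is_derive_line dgu.
by rewrite derive_dotv ?derive_cst ?dotv0r ?addr0 ?Dg //; exact: diff_derivable.
Qed.

Lemma near0_in_open x : U x -> exists2 r : R, 0 < r & forall z, `|z| < r -> U (x + z).
Proof.
move=> Ux; have /nbhs0P/nbhs_norm0P[r r_gt0 Ur] := open_nbhs_nbhs (conj U_open Ux).
by exists r.
Qed.

Definition grad_remainder x z := g (x + z) - g x - H x *m z.

Lemma near0_remainder_le x e : U x -> 0 < e ->
  exists2 r : R, 0 < r & forall z, `|z| < r ->
    U (x + z) /\ `|grad_remainder x z| <= e * `|z|.
Proof.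
move=> Ux e_gt0; have [dg Dg] := g_jac Ux.
have /nbhs0P near_U := open_nbhs_nbhs (conj U_open Ux).
have [r r_gt0 Hr] := nbhs_norm0P.1 (filterI near_U (differentiable_remainder_le dg Dg e_gt0)).
by exists r.
Qed.

Definition second_difference x u v t :=
  f (x + t *: v + t *: u) - f (x + t *: u) - f (x + t *: v) + f x.

Lemma second_differenceC x u v t : second_difference x u v t = second_difference x v u t.
Proof. by rewrite /second_difference [x + t *: u + _]addrAC; ring. Qed.

Lemma second_difference_mvt x u v t : 0 < t ->
  (forall s, 0 <= s <= t -> U (x + t *: v + s *: u) /\ U (x + s *: u)) ->
  exists2 c, 0 < c < t & second_difference x u v t
    = t * (dotv (g (x + t *: v + c *: u)) u - dotv (g (x + c *: u)) u).
Proof.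
move=> t_gt0 segU.
pose phi s := f (x + t *: v + s *: u) - f (x + s *: u).
pose dphi s := dotv (g (x + t *: v + s *: u)) u - dotv (g (x + s *: u)) u.
have Dphi s : 0 <= s <= t -> is_derive s 1 phi (dphi s).
  by move=> /segU[U1 U2]; apply: is_deriveB; apply: is_derive_f_line.
have [c cI c_val] : exists2 c, c \in `]0, t[ & phi t - phi 0 = dphi c * (t - 0).
  apply: MVT => // [s|].
    by rewrite in_itv /= => /andP[? ?]; apply: Dphi; rewrite !ltW.
  apply: derivable_within_continuous => s; rewrite in_itv /= => sI.
  by have [] := Dphi s sI.
exists c; first by move: cI; rewrite in_itv.
by rewrite subr0 in c_val; rewrite mulrC -c_val /phi /second_difference !scale0r !addr0; ring.
Qed.

Lemma second_difference_remainder x u v t : 0 < t ->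
  (forall s, 0 <= s <= t -> U (x + t *: v + s *: u) /\ U (x + s *: u)) ->
  exists2 c, 0 < c < t & second_difference x u v t - t ^+ 2 * dotv u (H x *m v)
    = t * dotv (grad_remainder x (t *: v + c *: u) - grad_remainder x (c *: u)) u.
Proof.
move=> t_gt0 /(second_difference_mvt t_gt0)[c cI ->]; exists c => //.
rewrite /grad_remainder !dotvBl mulmxDr -scalemxAr dotvDl dotvZl addrA.
by rewrite (dotvC (H x *m v) u); ring.
Qed.

Lemma second_difference_approx x u v e : U x -> 0 < e ->
  exists2 r, 0 < r & forall t, 0 < t <= r ->
    `|second_difference x u v t - t ^+ 2 * dotv u (H x *m v)| <= e * t ^+ 2.
Proof.
move=> Ux e_gt0.
set a := `|u| + `|v|; set Su := \sum_(i < n) `|u i 0|.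
have a_ge0 : 0 <= a by rewrite addr_ge0.
have Su_ge0 : 0 <= Su by rewrite sumr_ge0.
set e' := e / (2 * (a + 1) * (Su + 1)).
have e'_gt0 : 0 < e' by rewrite divr_gt0 // !mulr_gt0 // ltr_wpDl.
have [r r_gt0 near_x] := near0_remainder_le Ux e'_gt0.
exists (r / (a + 1)) => [|t /andP[t_gt0 t_le]]; first by rewrite divr_gt0 // ltr_wpDl.
have ta_lt : t * a < r.
  apply: lt_le_trans (_ : t * (a + 1) <= r); first by rewrite ltr_pM2l // ltrDl.
  by rewrite -ler_pdivlMr // ltr_wpDl.
have small z : `|z| <= t * a -> U (x + z) /\ `|grad_remainder x z| <= e' * (t * a).
  move=> z_le; have [Uz rem_le] := near_x z (le_lt_trans z_le ta_lt).
  by split=> //; apply: le_trans rem_le _; rewrite ler_wpM2l // ltW.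
have normZ k w : 0 <= k -> `|k *: w| = k * `|w| by move=> k_ge0; rewrite normrZ ger0_norm.
have z1_le s : 0 <= s <= t -> `|t *: v + s *: u| <= t * a.
  move=> /andP[s_ge0 s_le]; apply: le_trans (ler_normD _ _) _.
  by rewrite !normZ ?(ltW t_gt0) // /a mulrDr addrC lerD2r ler_wpM2r.
have z2_le s : 0 <= s <= t -> `|s *: u| <= t * a.
  move=> /andP[s_ge0 s_le]; rewrite normZ //; apply: le_trans (_ : t * `|u| <= _).
    by rewrite ler_wpM2r.
  by rewrite ler_wpM2l ?(ltW t_gt0) // lerDl.
have segU s : 0 <= s <= t -> U (x + t *: v + s *: u) /\ U (x + s *: u).
  move=> sI; rewrite -addrA.
  by split; [exact: (small _ (z1_le s sI)).1|exact: (small _ (z2_le s sI)).1].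
have [c /andP[c_gt0 c_lt] ->] := second_difference_remainder t_gt0 segU.
have cI : 0 <= c <= t by rewrite !ltW.
have rem_diff_le : `|dotv (grad_remainder x (t *: v + c *: u) - grad_remainder x (c *: u)) u|
    <= 2 * e' * (t * a) * Su.
  apply: le_trans (normr_dotv_le _ _) _; rewrite ler_wpM2r //.
  apply: le_trans (ler_normB _ _) _; rewrite -mulrA mulr2n mulrDl mul1r.
  by apply: lerD; [exact: (small _ (z1_le c cI)).2|exact: (small _ (z2_le c cI)).2].
rewrite normrM gtr0_norm //; apply: le_trans (ler_wpM2l (ltW t_gt0) rem_diff_le) _.
have -> : e = e' * (2 * (a + 1) * (Su + 1)).
  by rewrite /e' divfK // gt_eqF // !mulr_gt0 // ltr_wpDl.
have aSu : a * Su <= (a + 1) * (Su + 1) by nra.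
have e't : 0 <= t ^+ 2 * e' by rewrite mulr_ge0 // ?exprn_ge0 // ltW.
nra.
Qed.

Lemma hessian_sym x : U x -> forall u v, dotv u (H x *m v) = dotv v (H x *m u).
Proof.
move=> Ux u v; apply/eqP; rewrite -subr_eq0 -normr_le0.
apply/ler_addgt0Pr => e e_gt0; rewrite add0r.
have e2_gt0 : 0 < e / 2 by rewrite divr_gt0.
have [r1 r1_gt0 approx_uv] := second_difference_approx u v Ux e2_gt0.
have [r2 r2_gt0 approx_vu] := second_difference_approx v u Ux e2_gt0.
pose t := Order.min r1 r2.
have t_gt0 : 0 < t by rewrite lt_min r1_gt0.
have tI1 : 0 < t <= r1 by rewrite t_gt0 ge_min lexx.
have tI2 : 0 < t <= r2 by rewrite t_gt0 ge_min lexx orbT.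
have le_vu := approx_vu t tI2.
have := approx_uv t tI1; rewrite second_differenceC => le_uv.
have t2_gt0 : 0 < t ^+ 2 by rewrite exprn_gt0.
rewrite -(ler_pM2r t2_gt0) -{1}(gtr0_norm t2_gt0) -normrM.
set D := second_difference x v u t.
rewrite (_ : _ * t ^+ 2 = (D - t ^+ 2 * dotv v (H x *m u)) - (D - t ^+ 2 * dotv u (H x *m v))).
  by apply: le_trans (ler_normB _ _) _; rewrite (splitr e) mulrDl lerD.
ring.
Qed.

Hypothesis H_diff : forall x, U x -> differentiable H x.
Hypothesis f_strictly_convex : forall x y t, U x -> U y -> x != y -> 0 < t < 1 ->
  f (t *: x + (1 - t) *: y) < t * f x + (1 - t) * f y.
Hypothesis H_self_concordant : forall x h, U x ->
  `| 'D_h (fun y => (h^T *m H y *m h) 0 0) x |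
    <= 2 * Num.sqrt ((h^T *m H x *m h) 0 0) ^+ 3.

(* Self-concordance bounds the growth of h' H h along the line x + s h, so a
   nonpositive value at x cannot become positive immediately. *)
Lemma hessian_form_nonpos_segment x h : U x -> dotv h (H x *m h) <= 0 ->
  exists2 T, 0 < T & forall s, 0 <= s <= T ->
    U (x + s *: h) /\ dotv h (H (x + s *: h) *m h) <= 0.
Proof.
move=> Ux Q_le0.
have [r r_gt0 rU] := near0_in_open Ux.
pose T := r / (`|h| + 1).
have T_gt0 : 0 < T by rewrite divr_gt0 // ltr_wpDl.
have segU s : 0 <= s <= T -> U (x + s *: h).
  move=> /andP[s0 sT]; apply: rU; rewrite normrZ ger0_norm //.
  apply: le_lt_trans (ler_wpM2r (normr_ge0 h) sT) _.
  by rewrite /T mulrAC ltr_pdivrMr ?ltr_wpDl // ltr_pM2l // ltrDl.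
pose Q y := dotv h (H y *m h).
have QE : (fun y => (h^T *m H y *m h) 0 0) = Q.
  by apply: funext => y; rewrite /Q /dotv mulmxA.
have DQ s : 0 <= s <= T ->
    is_derive s 1 (fun s => Q (x + s *: h)) ('D_h Q (x + s *: h)).
  move=> /segU/H_diff dH; apply: is_derive_line.
  by apply: derivable_dotv; [exact: derivable_cst|exact/derivable_mulmxr/diff_derivable].
have Q_growth s : 0 <= s <= T ->
    'D_h Q (x + s *: h) <= 2 * Num.sqrt (Q (x + s *: h)) ^+ 3.
  move=> /segU/(H_self_concordant h); rewrite QE.
  have -> : (h^T *m H (x + s *: h) *m h) 0 0 = Q (x + s *: h) by rewrite /Q /dotv mulmxA.
  exact: le_trans (ler_norm _).
have Q0 : Q (x + 0 *: h) <= 0 by rewrite scale0r addr0.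
have [T1 /andP[T1_gt0 T1_le] Q_nonpos] := nonpos_of_derive_le_sqrt3 T_gt0 DQ Q_growth Q0.
exists T1 => // s sI; split; last exact: Q_nonpos.
by apply: segU; case/andP: sI => s0 sT1; rewrite s0 (le_trans sT1).
Qed.

Lemma hessian_pos x h : U x -> h != 0 -> 0 < dotv h (H x *m h).
Proof.
move=> Ux h_neq0; rewrite ltNge; apply/negP.
move=> /(hessian_form_nonpos_segment Ux)[T T_gt0 seg].
have D1 s : 0 <= s <= T ->
    is_derive s 1 (fun s => f (x + s *: h)) (dotv (g (x + s *: h)) h).
  by move=> /seg[Us _]; exact: is_derive_f_line.
have D2 s : 0 <= s <= T -> is_derive s 1 (fun s => dotv (g (x + s *: h)) h)
    (dotv (H (x + s *: h) *m h) h).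
  by move=> /seg[Us _]; exact: is_derive_g_line.
have DD_le0 s : 0 < s < T -> dotv (H (x + s *: h) *m h) h <= 0.
  by move=> /andP[s0 sT]; rewrite dotvC; apply: (seg s _).2; rewrite !ltW.
have := concave_midpoint (ltW T_gt0) D1 D2 DD_le0.
have UT : U (x + T *: h) by apply: (seg T _).1; rewrite lexx ltW.
have xT_neq : x + T *: h != x.
  by rewrite -subr_eq0 addrC addKr scaler_eq0 negb_or h_neq0 gt_eqF.
have half : 0 < (2^-1 : R) < 1 by rewrite invr_gt0 ltr0n invf_lt1 ?ltr1n.
have := f_strictly_convex UT Ux xT_neq half.
have -> : 2^-1 *: (x + T *: h) + (1 - 2^-1) *: x = x + (0 + T) / 2 *: h.
  rewrite scalerDr scalerA addrAC -scalerDl add0r mulrC.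
  by rewrite (_ : 2^-1 + (1 - 2^-1) = 1 :> R) ?scale1r //; field.
rewrite scale0r addr0; lra.
Qed.

Lemma hessian_ge0 x : U x -> forall w, 0 <= dotv w (H x *m w).
Proof.
move=> Ux w; have [->|w_neq0] := eqVneq w 0; first by rewrite dotv0l.
exact/ltW/hessian_pos.
Qed.

Lemma hessian_unit x : U x -> H x \in unitmx.
Proof.
move=> Ux; rewrite -unitmx_tr -row_free_unit; apply: inj_row_free => v Hv.
have Hv_col : H x *m v^T = 0 by rewrite -(trmxK (H x)) -trmx_mul Hv trmx0.
apply: trmx_inj; rewrite trmx0; apply/eqP; apply: contraT => v_neq0.
by have := hessian_pos Ux v_neq0; rewrite Hv_col dotv0r ltxx.
Qed.

Variable nu : R.
Hypothesis f_log_homogeneous : forall x t, U x -> 0 < t -> f (t *: x) = f x - nu * ln t.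

(* Differentiate s |-> f (x + s x) = f x - nu ln (1 + s) at s = 0. *)
Lemma dotv_grad_self x : U x -> dotv (g x) x = - nu.
Proof.
move=> Ux; have [df <-] := f_grad Ux.
have Dln : is_derive (0 : R) 1 (fun s : R => ln (1 + s *: (1 : R))) 1.
  have [dln1 dln1_val] := is_derive1_ln (@ltr01 R).
  have := @is_derive_line R R^o R^o (@ln R) 1 1 0.
  by rewrite scale0r addr0 dln1_val invr1; apply.
have Dhom := is_deriveB (is_derive_cst (f x) (0 : R) 1) (is_deriveZ nu Dln).
have line_hom : \forall s \near (0 : R),
    (cst (f x) - nu *: (fun s : R => ln (1 + s *: (1 : R)))) s = f (x + s *: x).
  have : \forall s \near (0 : R), -1 < s.
    by apply: (@cvgr_gt _ _ _ _ id 0 cvg_id); rewrite ltrN10.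
  apply: filterS => s s_gt /=.
  rewrite -{2}(scale1r x) -scalerDl f_log_homogeneous //; last by rewrite -ltrBlDl sub0r.
  change (f x - nu * ln (1 + s *: (1 : R^o)) = f x - nu * ln (1 + s)).
  by rewrite [s *: _]mulr1.
have := @is_derive_line R _ _ f x x 0; rewrite scale0r addr0.
move=> /(_ (@diff_derivable _ _ _ f x x df)) [_ <-].
have [_ ->] := near_eq_is_derive line_hom Dhom.
by rewrite sub0r [nu%:A]mulr1.
Qed.

(* Differentiate the identity dotv (g y) y = - nu at y = x in direction v. *)
Lemma dotv_self_hessian x : U x -> forall v, dotv x (H x *m v) = - dotv (g x) v.
Proof.
move=> Ux v; have [dg Dg] := g_jac Ux.
have euler : \forall y \near x, dotv (g y) (id y) = cst (- nu) y.
  by apply: filterS (open_nbhs_nbhs (conj U_open Ux)) => y /dotv_grad_self.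
have := derive_dotv (diff_derivable dg (v := v)) (@derivable_id _ _ x v).
rewrite (near_eq_derive _ euler) derive_cst derive_id Dg => /eqP.
by rewrite eq_sym addr_eq0 dotvC => /eqP.
Qed.

End Barrier.

Section NewtonStep.
Variables (R : realType) (n : nat).
Notation vec := 'cV[R]_n.
Implicit Types (M : 'M[R]_n) (tau : R) (gx x s dx ds : vec).

Lemma dotv_ker_orth m (A : 'M[R]_(m, n)) (dx ds : vec) (dy : 'cV[R]_m) :
  A *m dx = 0 -> A^T *m dy + ds = 0 -> dotv dx ds = 0.
Proof.
move=> Adx /eqP; rewrite addrC addr_eq0 => /eqP ->.
by rewrite dotvNr dotv_trmx Adx dotv0l oppr0.
Qed.

Lemma dual_local_normE M v : dual_local_norm M v = Num.sqrt (dotv v (invmx M *m v)).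
Proof. by rewrite /dual_local_norm /dotv mulmxA. Qed.

Lemma newton_duality_gap nu tau M gx x s dx ds :
  dotv gx x = - nu -> (forall v, dotv x (M *m v) = - dotv gx v) ->
  dotv dx ds = 0 -> tau *: (M *m dx) + ds = - (s + tau *: gx) ->
  dotv (x + dx) (s + ds) = tau * (nu - dotv dx (M *m dx)).
Proof.
move=> gx_x x_M dxds newton.
have newton_dot w : tau * dotv w (M *m dx) + dotv w ds = - dotv w s - tau * dotv w gx.
  by rewrite -dotvZr -dotvDr newton dotvNr dotvDr dotvZr opprD.
have := newton_dot x; have := newton_dot dx.
rewrite x_M dxds (dotvC x gx) gx_x (dotvC dx gx) dotvDl !dotvDr dxds.
lra.
Qed.

Lemma dotv_invmx_pythagoras M tau dx ds : M \in unitmx ->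
  (forall u v, dotv u (M *m v) = dotv v (M *m u)) -> dotv dx ds = 0 ->
  dotv (tau *: (M *m dx) + ds) (invmx M *m (tau *: (M *m dx) + ds))
    = tau ^+ 2 * dotv dx (M *m dx) + dotv ds (invmx M *m ds).
Proof.
move=> M_unit M_sym dxds.
set q := invmx M *m ds; have Mq : M *m q = ds := mulKVmx M_unit ds.
rewrite mulmxDr -scalemxAr mulKmx // -/q dotvDl !dotvDr !dotvZl !dotvZr.
rewrite (dotvC (M *m dx) dx) (dotvC ds dx) dxds (dotvC _ q) M_sym Mq dxds; ring.
Qed.

Lemma newton_hessian_form_le M eta tau gx s dx ds : 0 < tau -> M \in unitmx ->
  (forall u v, dotv u (M *m v) = dotv v (M *m u)) -> (forall w, 0 <= dotv w (M *m w)) ->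
  dotv dx ds = 0 -> tau *: (M *m dx) + ds = - (s + tau *: gx) ->
  dual_local_norm M (s + tau *: gx) <= eta * tau -> dotv dx (M *m dx) <= eta ^+ 2.
Proof.
move=> tau_gt0 M_unit M_sym M_psd dxds newton.
rewrite dual_local_normE -[s + _]opprK -newton mulmxN dotvNl dotvNr opprK.
rewrite dotv_invmx_pythagoras // => norm_le.
have ds_ge0 : 0 <= dotv ds (invmx M *m ds).
  by rewrite -{1}(mulKVmx M_unit ds) dotvC M_sym M_psd.
have eta_tau_ge0 : 0 <= eta * tau := le_trans (sqrtr_ge0 _) norm_le.
move: norm_le; rewrite -(ger0_norm eta_tau_ge0) -sqrtr_sqr ler_sqrt ?sqr_ge0 // => sqr_le.
rewrite -(ler_pM2l (exprn_gt0 2 tau_gt0)); nra.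
Qed.

End NewtonStep.

Theorem lemma2p3 (R : realType) (n m : nat) (K : set 'cV[R]_n)
  (f : 'cV[R]_n -> R) (g : 'cV[R]_n -> 'cV[R]_n) (H : 'cV[R]_n -> 'M[R]_n)
  (nu : R) (A : 'M[R]_(m, n)) (b : 'cV[R]_m) (c : 'cV[R]_n)
  (eta tau : R) (x : 'cV[R]_n) (y : 'cV[R]_m) (s : 'cV[R]_n)
  (dx : 'cV[R]_n) (dy : 'cV[R]_m) (ds : 'cV[R]_n) :
  proper_cone K -> LHSCB K f g H nu ->
  \rank A = m ->
  0 < eta -> 0 < tau ->
  (* (x, y, s) in N(eta, tau) *)
  interior K x -> interior (dual_cone K) s ->
  A *m x = b -> A^T *m y + s = c ->
  dual_local_norm (H x) (s + tau *: g x) <= eta * tau ->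
  (* Newton system *)
  A *m dx = 0 -> A^T *m dy + ds = 0 ->
  tau *: (H x *m dx) + ds = - (s + tau *: g x) ->
  tau * (nu - eta ^+ 2) <= dotv (x + dx) (s + ds) <= tau * nu.
Proof.
move=> _ [smooth f_strictly_convex [_ H_self_concordant _ f_log_homogeneous]] _ _.
move=> tau_gt0 Kx _ _ _ near_central Adx Ady newton.
have K_open : open (interior K) := @open_interior _ K.
have f_grad z : interior K z -> differentiable f z /\ forall v, 'D_v f z = dotv (g z) v.
  by case/smooth.
have g_jac z : interior K z -> differentiable g z /\ forall v, 'D_v g z = H z *m v.
  by case/smooth.
have H_diff z : interior K z -> differentiable H z by case/smooth.
have H_ge0 := hessian_ge0 K_open f_grad g_jac H_diff f_strictly_convex H_self_concordant Kx.
have H_unit := hessian_unit K_open f_grad g_jac H_diff f_strictly_convex H_self_concordant Kx.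
have dxds := dotv_ker_orth Adx Ady.
have Q_le := newton_hessian_form_le tau_gt0 H_unit (hessian_sym K_open f_grad g_jac Kx)
  H_ge0 dxds newton near_central.
rewrite (newton_duality_gap (dotv_grad_self f_grad f_log_homogeneous Kx)
  (dotv_self_hessian K_open f_grad g_jac f_log_homogeneous Kx) dxds newton).
have Q_ge0 := H_ge0 dx.
by apply/andP; split; nra.
Qed.
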